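(* Let $X$ be a linearly ordered set. The free $\mathrm{GD}^!$-algebra $\mathrm{GD}^!\langle X\rangle$ is linearly spanned by elements of the form $x_1*\dots*x_t*w$ with $t\ge 0$, $x_i\in X$, $x_1\le\dots\le x_t$, where $w$ is a monomial in $X$ built using the operation $\star$ only.
   Context: A $\mathrm{GD}^!$-algebra is a vector space with two bilinear operations $*$ and $\star$ such that $*$ is associative and commutative, and $(x\star y)\star z-x\star(y\star z)=(x\star z)\star y-x\star(z\star y)$, $x\star(y\star z)=y\star(x\star z)$, $x\star(y*z)=(x\star y)*z$, $x\star(y*z)+y\star(x*z)=(x*y)\star z$. *)

From HB Require Import structures.
From mathcomp Require Import all_boot all_order all_algebra.
Set Implicit Arguments. Unset Strict Implicit. Unset Printing Implicit Defensive.
Import Order.TTheory GRing.Theory.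
Local Open Scope ring_scope.

(* GD^!-algebra structure on a K-vector space V: two bilinear operations
   cm ( * , associative & commutative) and st ( \star ) with the four identities. *)
Definition bilinear_op (K : fieldType) (V : lmodType K) (op : V -> V -> V) :=
  (forall (a : K) x y z, op (a *: x + y) z = a *: op x z + op y z) /\
  (forall (a : K) x y z, op x (a *: y + z) = a *: op x y + op x z).

Definition is_GDshriek (K : fieldType) (V : lmodType K) (cm st : V -> V -> V) :=
  bilinear_op cm /\ bilinear_op st /\
      (forall x y z, cm (cm x y) z = cm x (cm y z)) /\
      (forall x y, cm x y = cm y x) /\
      (forall x y z, st (st x y) z - st x (st y z) = st (st x z) y - st x (st z y)) /\
      (forall x y z, st x (st y z) = st y (st x z)) /\
      (forall x y z, st x (cm y z) = cm (st x y) z) /\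
      (forall x y z, st x (cm y z) + st y (cm x z) = st (cm x y) z).

(* Terms of the free algebra: the free GD^!<X> is terms modulo gd_equiv. *)
Inductive term (K : Type) (X : Type) :=
| TVar of X
| TZero
| TAdd of term K X & term K X
| TScale of K & term K X
| TCm of term K X & term K X
| TSt of term K X & term K X.

Fixpoint eval_term (K : fieldType) (X : Type) (V : lmodType K)
  (cm st : V -> V -> V) (v : X -> V) (t : term K X) : V :=
  match t with
  | TVar x => v x
  | TZero => 0
  | TAdd a b => eval_term cm st v a + eval_term cm st v b
  | TScale c a => c *: eval_term cm st v a
  | TCm a b => cm (eval_term cm st v a) (eval_term cm st v b)
  | TSt a b => st (eval_term cm st v a) (eval_term cm st v b)
  end.

(* Equality in the free GD^!-algebra on X: equal under every valuation in
   every GD^!-algebra over K. *)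
Definition gd_equiv (K : fieldType) (X : Type) (t1 t2 : term K X) : Prop :=
  forall (V : lmodType K) (cm st : V -> V -> V), is_GDshriek cm st ->
  forall v : X -> V, eval_term cm st v t1 = eval_term cm st v t2.

Inductive smon (X : Type) :=
| SVar of X
| SSt of smon X & smon X.

Fixpoint smon_term (K X : Type) (w : smon X) : term K X :=
  match w with
  | SVar x => TVar K x
  | SSt a b => TSt (smon_term K a) (smon_term K b)
  end.

Definition nf_term (K X : Type) (xs : seq X) (w : smon X) : term K X :=
  foldr (fun x t => TCm (TVar K x) t) (smon_term K w) xs.

Definition lincomb_term (K X : Type) (c : seq (K * (seq X * smon X))) : term K X :=
  foldr (fun p t => TAdd (TScale p.1 (nf_term K p.2.1 p.2.2)) t) (TZero K X) c.

From HB Require Import structures.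
From mathcomp Require Import all_boot all_order all_algebra.

(* A normal monomial is a pair (xs, w) standing for x_1 * (x_2 * ... (x_t * w)),
   with xs = [:: x_1; ...; x_t] and w a monomial built with \star only.  We show
   that formal linear combinations of normal monomials are closed under both
   operations, by explicit multiplication rules valid in every GD^!-algebra:
   - (a \star b) * w' = a \star (b * w')          (identity 3),
   - a \star (x * W) = x * (a \star W)            (identity 3),
   - (x * W) \star u = x \star (W * u) + x * (W \star u)   (identities 4, 3 and commutativity).
   By induction on terms, every term is then equal in all GD^!-algebras to such a
   combination; finally, since * is associative and commutative, the prefix xs of
   each normal monomial may be sorted without changing its value. *)

Set Implicit Arguments. Unset Strict Implicit. Unset Printing Implicit Defensive.
Import Order.TTheory GRing.Theory.
Local Open Scope ring_scope.

Section Bilinear.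
Variables (K : fieldType) (V : lmodType K) (op : V -> V -> V).
Hypothesis op_bil : bilinear_op op.

Lemma opDl x y z : op (x + y) z = op x z + op y z.
Proof. by have := op_bil.1 1 x y z; rewrite !scale1r. Qed.

Lemma opDr x y z : op z (x + y) = op z x + op z y.
Proof. by have := op_bil.2 1 z x y; rewrite !scale1r. Qed.

Lemma op0l z : op 0 z = 0.
Proof. by apply: (@addrI _ (op 0 z)); rewrite addr0 -opDl addr0. Qed.

Lemma op0r z : op z 0 = 0.
Proof. by apply: (@addrI _ (op z 0)); rewrite addr0 -opDr addr0. Qed.

Lemma opZl a x z : op (a *: x) z = a *: op x z.
Proof. by have := op_bil.1 a x 0 z; rewrite !addr0 op0l addr0. Qed.

Lemma opZr a x z : op z (a *: x) = a *: op z x.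
Proof. by have := op_bil.2 a z x 0; rewrite !addr0 op0r addr0. Qed.

End Bilinear.

Section NormalForms.
Variables (K : fieldType) (X : Type).
Notation nf := (seq X * smon X)%type.
Notation lc := (seq (K * nf)).

Definition scale_lc (k : K) (c : lc) : lc := map (fun p => (k * p.1, p.2)) c.

Definition prefix_lc (xs : seq X) (c : lc) : lc :=
  map (fun p => (p.1, (xs ++ p.2.1, p.2.2))) c.

Definition st_lc (a : smon X) (c : lc) : lc :=
  map (fun p => (p.1, (p.2.1, SSt a p.2.2))) c.

Definition bilin_lc (f : nf -> nf -> lc) (c1 c2 : lc) : lc :=
  flatten (map (fun p => flatten (map (fun q =>
    scale_lc (p.1 * q.1) (f p.2 q.2)) c2)) c1).

(* w * w' for \star-monomials, using (a \star b) * w' = a \star (b * w'). *)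
Fixpoint cm_smon (w w' : smon X) : lc :=
  match w with
  | SVar x => [:: (1, ([:: x], w'))]
  | SSt a b => st_lc a (cm_smon b w')
  end.

(* (x_1 * ... * x_t * w) \star u, peeling x_1 off with identity 4. *)
Fixpoint st_prefix (xs : seq X) (w u : smon X) : lc :=
  match xs with
  | [::] => [:: (1, ([::], SSt w u))]
  | x :: xs' => st_lc (SVar x) (prefix_lc xs' (cm_smon w u))
                ++ prefix_lc [:: x] (st_prefix xs' w u)
  end.

Definition cm_nf (p q : nf) : lc := prefix_lc (p.1 ++ q.1) (cm_smon p.2 q.2).

Definition st_nf (p q : nf) : lc := prefix_lc q.1 (st_prefix p.1 p.2 q.2).

End NormalForms.
Arguments cm_smon {K X}.
Arguments st_prefix {K X}.
Arguments cm_nf {K X}.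
Arguments st_nf {K X}.

Section Evaluation.
Variables (K : fieldType) (X : Type) (V : lmodType K) (cm st : V -> V -> V).
Variable v : X -> V.
Hypothesis gdV : is_GDshriek cm st.
Notation nf := (seq X * smon X)%type.
Notation lc := (seq (K * nf)).

Definition eval_smon (w : smon X) : V := eval_term cm st v (smon_term K w).

Definition cm_prefix (xs : seq X) (W : V) : V := foldr (fun x r => cm (v x) r) W xs.

Definition eval_nf (p : nf) : V := cm_prefix p.1 (eval_smon p.2).

Definition eval_lc (c : lc) : V := foldr (fun p r => p.1 *: eval_nf p.2 + r) 0 c.

Let cm_bil : bilinear_op cm := gdV.1.
Let st_bil : bilinear_op st := gdV.2.1.
Let cmA : forall x y z, cm (cm x y) z = cm x (cm y z) := gdV.2.2.1.
Let cmC : forall x y, cm x y = cm y x := gdV.2.2.2.1.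
Let st_cm : forall x y z, st x (cm y z) = cm (st x y) z := gdV.2.2.2.2.2.2.1.
Let cm_st : forall x y z, st x (cm y z) + st y (cm x z) = st (cm x y) z :=
  gdV.2.2.2.2.2.2.2.

Lemma eval_lc_cat c1 c2 : eval_lc (c1 ++ c2) = eval_lc c1 + eval_lc c2.
Proof. by elim: c1 => [|p c IH] /=; rewrite ?add0r // IH addrA. Qed.

Lemma eval_scale_lc k c : eval_lc (scale_lc k c) = k *: eval_lc c.
Proof. by elim: c => [|p c IH] /=; rewrite ?scaler0 // IH scalerDr scalerA. Qed.

Lemma eval_bilin_lc (f : nf -> nf -> lc) (op : V -> V -> V) :
  bilinear_op op -> (forall p q, eval_lc (f p q) = op (eval_nf p) (eval_nf q)) ->
  forall c1 c2, eval_lc (bilin_lc f c1 c2) = op (eval_lc c1) (eval_lc c2).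
Proof.
move=> op_bil f_op c1 c2; elim: c1 => [|p c1 IH] /=; first by rewrite (op0l op_bil).
rewrite eval_lc_cat IH (opDl op_bil) (opZl op_bil); congr (_ + _).
elim: c2 {IH} => [|q c2 IH2] /=; first by rewrite (op0r op_bil) scaler0.
by rewrite eval_lc_cat IH2 eval_scale_lc f_op (opDr op_bil) (opZr op_bil) scalerDr scalerA.
Qed.

Lemma cm_prefix_cat xs ys W : cm_prefix (xs ++ ys) W = cm_prefix xs (cm_prefix ys W).
Proof. exact: foldr_cat. Qed.

Lemma cm_prefixl xs W Z : cm (cm_prefix xs W) Z = cm_prefix xs (cm W Z).
Proof. by elim: xs => [|x xs IH] //=; rewrite cmA IH. Qed.

Lemma cm_prefixr xs W Z : cm Z (cm_prefix xs W) = cm_prefix xs (cm Z W).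
Proof. by rewrite cmC cm_prefixl cmC. Qed.

(* a \star (x * W) = x * (a \star W), a consequence of identity 3. *)
Lemma st_cm_prefix xs A W : st A (cm_prefix xs W) = cm_prefix xs (st A W).
Proof. by elim: xs => [|x xs IH] //=; rewrite [cm (v x) _]cmC st_cm IH cmC. Qed.

Lemma cm_prefix_lin xs a W1 W2 :
  cm_prefix xs (a *: W1 + W2) = a *: cm_prefix xs W1 + cm_prefix xs W2.
Proof. by elim: xs => [|x xs IH] //=; rewrite IH (opDr cm_bil) (opZr cm_bil). Qed.

Lemma cm_prefix0 xs : cm_prefix xs 0 = 0.
Proof. by elim: xs => [|x xs IH] //=; rewrite IH (op0r cm_bil). Qed.

Lemma eval_prefix_lc xs c : eval_lc (prefix_lc xs c) = cm_prefix xs (eval_lc c).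
Proof.
elim: c => [|p c IH] /=; first by rewrite cm_prefix0.
by rewrite IH cm_prefix_lin /eval_nf cm_prefix_cat.
Qed.

Lemma eval_st_lc a c : eval_lc (st_lc a c) = st (eval_smon a) (eval_lc c).
Proof.
elim: c => [|p c IH] /=; first by rewrite (op0r st_bil).
by rewrite IH (opDr st_bil) (opZr st_bil) /eval_nf st_cm_prefix.
Qed.

Lemma eval_cm_smon w u : eval_lc (cm_smon w u) = cm (eval_smon w) (eval_smon u).
Proof.
elim: w => [x|a _ b IH] /=; first by rewrite /eval_nf /= scale1r addr0.
by rewrite eval_st_lc IH st_cm.
Qed.

Lemma eval_st_prefix xs w u :
  eval_lc (st_prefix xs w u) = st (cm_prefix xs (eval_smon w)) (eval_smon u).
Proof.
elim: xs => [|x xs IH] /=; first by rewrite /eval_nf /= scale1r addr0.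
rewrite eval_lc_cat eval_st_lc !eval_prefix_lc eval_cm_smon IH -cm_st -cm_prefixl.
by congr (_ + _); rewrite /= [cm (v x) (eval_smon u)]cmC st_cm cmC.
Qed.

Lemma eval_cm_nf p q : eval_lc (cm_nf p q) = cm (eval_nf p) (eval_nf q).
Proof.
by rewrite eval_prefix_lc eval_cm_smon /eval_nf cm_prefix_cat cm_prefixl cm_prefixr.
Qed.

Lemma eval_st_nf p q : eval_lc (st_nf p q) = st (eval_nf p) (eval_nf q).
Proof. by rewrite eval_prefix_lc eval_st_prefix /eval_nf st_cm_prefix. Qed.

Lemma eval_lincomb_term c : eval_term cm st v (lincomb_term c) = eval_lc c.
Proof.
elim: c => [|p c IH] //=; rewrite IH; congr (_ *: _ + _).
by rewrite /nf_term /eval_nf /cm_prefix; elim: p.2.1 => [|x xs IHx] //=; rewrite IHx.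
Qed.

Lemma cm_prefix_move l1 x l2 W :
  cm_prefix (l1 ++ x :: l2) W = cm_prefix (x :: l1 ++ l2) W.
Proof. by elim: l1 => [|a l1 IH] //=; rewrite IH /= -!cmA [cm (v a) (v x)]cmC. Qed.

End Evaluation.

Lemma term_spanned (K : fieldType) (X : Type) (u : term K X) :
  exists c : seq (K * (seq X * smon X)),
    forall (V : lmodType K) (cm st : V -> V -> V), is_GDshriek cm st ->
    forall v, eval_term cm st v u = eval_lc cm st v c.
Proof.
elim: u => [x||a [ca Ha] b [cb Hb]|k a [ca Ha]|a [ca Ha] b [cb Hb]|a [ca Ha] b [cb Hb]].
- by exists [:: (1, ([::], SVar x))] => V cm st gdV v /=; rewrite /eval_nf scale1r addr0.
- by exists [::].
- by exists (ca ++ cb) => V cm st gdV v /=; rewrite eval_lc_cat Ha // Hb.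
- by exists (scale_lc k ca) => V cm st gdV v /=; rewrite eval_scale_lc Ha.
- exists (bilin_lc cm_nf ca cb) => V cm st gdV v /=.
  by rewrite (eval_bilin_lc (op := cm)) ?Ha ?Hb //; [exact: gdV.1 | exact: eval_cm_nf].
- exists (bilin_lc st_nf ca cb) => V cm st gdV v /=.
  by rewrite (eval_bilin_lc (op := st)) ?Ha ?Hb //; [exact: gdV.2.1 | exact: eval_st_nf].
Qed.

Lemma cm_prefix_perm (K : fieldType) (X : eqType) (V : lmodType K) (cm st : V -> V -> V)
    (v : X -> V) :
  is_GDshriek cm st ->
  forall xs ys W, perm_eq xs ys -> cm_prefix cm v xs W = cm_prefix cm v ys W.
Proof.
move=> gdV; elim=> [|x xs IH] ys W; first by move=> /perm_size /esym /size0nil ->.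
move=> xs_ys; have x_ys : x \in ys by rewrite -(perm_mem xs_ys) mem_head.
move: xs_ys; case/splitPr: x_ys => ys1 ys2 xs_ys.
rewrite (cm_prefix_move v gdV) /= (IH (ys1 ++ ys2)) //.
by rewrite -(perm_cons x) (perm_trans xs_ys) // -cat1s perm_catCA.
Qed.

Definition sort_lc (K : fieldType) (d : Order.disp_t) (X : orderType d)
    (c : seq (K * (seq X * smon X))) : seq (K * (seq X * smon X)) :=
  map (fun p => (p.1, (sort (fun x y : X => (x <= y)%O) p.2.1, p.2.2))) c.

Lemma sort_lc_sorted (K : fieldType) (d : Order.disp_t) (X : orderType d)
    (c : seq (K * (seq X * smon X))) :
  all (fun p => sorted (fun x y : X => (x <= y)%O) p.2.1) (sort_lc c).
Proof. by elim: c => [|p c IH] //=; rewrite IH andbT; apply/sort_sorted/le_total. Qed.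

Lemma eval_sort_lc (K : fieldType) (d : Order.disp_t) (X : orderType d)
    (V : lmodType K) (cm st : V -> V -> V) (v : X -> V) :
  is_GDshriek cm st -> forall c, eval_lc cm st v (sort_lc c) = eval_lc cm st v c.
Proof.
move=> gdV; elim=> [|p c IH] //=; rewrite IH; congr (_ *: _ + _).
by apply: (cm_prefix_perm _ gdV); rewrite perm_sort.
Qed.

Theorem mainTheorem5 (K : fieldType) (d : Order.disp_t) (X : orderType d)
  (u : term K X) :
  exists c : seq (K * (seq X * smon X)),
    all (fun p => sorted (fun x y : X => (x <= y)%O) p.2.1) c /\
    gd_equiv u (lincomb_term c).
Proof.
have [c u_c] := term_spanned u.
exists (sort_lc c); split; first exact: sort_lc_sorted.
by move=> V cm st gdV v; rewrite eval_lincomb_term eval_sort_lc // u_c.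
Qed.
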